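(* In the proposed quantized Grassmannian feedback scheme with a sphere-packing codebook (satisfying $\max_F d_c(\hat F,F)\le \Delta(1+o(2^{-N_f/N_G}))$), choosing the number of feedback bits per receiver as $$N_f=N((K-1)M-N)\log_2 P$$ keeps the interference leakage power $L_i$ of every receiver bounded by a constant independent of $P$ as $P\to\infty$.
   Context: System model: $K$ transmitter–receiver pairs, $M$ transmit and $N$ receive antennas per node, $(K-1)M\ge N$; generic channels $H_{ij}\in\mathbb{C}^{N\times M}$; truncated unitary precoders $V_j\in\mathbb{C}^{M\times d}$; inputs $x_j$ with $\mathbb{E}[x_jx_j^H]=\frac{P}{d}I_d$; $y_i=H_{ii}V_ix_i+\sum_{j\ne i}H_{ij}V_jx_j+n_i$, $n_i\sim\mathcal{CN}(0,I_N)$. $H_i=[H_{i1},\dots,H_{i,i-1},H_{i,i+1},\dots,H_{iK}]$, $V_{-i}=\mathrm{Bdiag}(V_1,\dots,V_{i-1},V_{i+1},\dots,V_K)$. Scheme: economy QR $H_i^H=F_iC_i$ ($F_i$ truncated unitary $(K-1)M\times N$, $C_i$ invertible); codebook $\mathcal S$ of $2^{N_f}$ truncated unitary $(K-1)M\times N$ matrices; $\hat F_i=\arg\min_{S\in\mathcal S}d_c(S,F_i)$ with $d_c(X,Y)=\frac1{\sqrt2}\|XX^H-YY^H\|_F$; truncated unitary $V_j$, $\tilde U_i\in\mathbb{C}^{N\times d}$ with $\tilde U_i^H\hat F_i^HV_{-i}=0$; receive filter $G_i^H$, $G_i=C_i^{-1}F_i^H\hat F_i\tilde U_i$; leakage $e_i=\sum_{j\ne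 i}G_i^HH_{ij}V_jx_j$, $L_i=\mathrm{tr}\,\mathbb{E}[e_ie_i^H]$. $N_G=2N((K-1)M-N)$, $\Delta=2/(c\,2^{N_f})^{1/N_G}$ with $c$ a positive constant depending only on $K,M,N$. *)

(* complex scalars are an arbitrary numClosedFieldType C
   (e.g. algC); real quantities are the real elements of C. *)
From HB Require Import structures.
From mathcomp Require Import all_boot all_order all_algebra.
Set Implicit Arguments. Unset Strict Implicit. Unset Printing Implicit Defensive.
Import Order.TTheory GRing.Theory Num.Theory.
Local Open Scope ring_scope.

Definition mxH (C : numClosedFieldType) m n (X : 'M[C]_(m, n)) : 'M[C]_(n, m) :=
  (map_mx Num.conj X)^T.

Definition trunc_unitary (C : numClosedFieldType) m n (X : 'M[C]_(m, n)) : Prop :=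
  mxH X *m X = 1%:M.

Definition frob (C : numClosedFieldType) m n (X : 'M[C]_(m, n)) : C :=
  sqrtC (\sum_(a < m) \sum_(b < n) `|X a b| ^+ 2).

Definition dchord (C : numClosedFieldType) m n (X Y : 'M[C]_(m, n)) : C :=
  (sqrtC 2)^-1 * frob (X *m mxH X - Y *m mxH Y).

Definition NG (K M N : nat) : nat := (2 * N * (K.-1 * M - N))%N.

(* Delta = 2 / (c Q)^(1/N_G), where Q = 2^{N_f} *)
Definition Delta (C : numClosedFieldType) (K M N : nat) (c Q : C) : C :=
  2 / (NG K M N).-root (c * Q).

(* H_i = [H_{i1} .. H_{i,i-1} H_{i,i+1} .. H_{iK}]  (N x (K-1)M) *)
Definition Hcat (C : numClosedFieldType) (K M N : nat)
  (H : 'I_K -> 'I_K -> 'M[C]_(N, M)) (i : 'I_K) :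
  'M[C]_(N, \sum_(j < K.-1) M) :=
  \mxrow_(j < K.-1) H i (lift i j).

(* V_{-i} = Bdiag(V_1,..,V_{i-1},V_{i+1},..,V_K)  ((K-1)M x (K-1)d) *)
Definition Vminus (C : numClosedFieldType) (K M d : nat)
  (V : 'I_K -> 'M[C]_(M, d)) (i : 'I_K) :
  'M[C]_(\sum_(j < K.-1) M, \sum_(j < K.-1) d) :=
  \mxblock_(j < K.-1, k < K.-1) (if j == k then V (lift i j) else 0).

Definition Gfilt (C : numClosedFieldType) (p N d : nat)
  (Ci : 'M[C]_N) (F Fh : 'M[C]_(p, N)) (U : 'M[C]_(N, d)) : 'M[C]_(N, d) :=
  invmx Ci *m mxH F *m Fh *m U.

(* leakage L_i = tr E[e_i e_i^H] with independent zero-mean inputs,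
   E[x_j x_j^H] = P/d I:  L_i = sum_{j<>i} P/d tr(A_j A_j^H),
   A_j = G_i^H H_ij V_j *)
Definition leakage (C : numClosedFieldType) (K M N d : nat) (P : C)
  (H : 'I_K -> 'I_K -> 'M[C]_(N, M)) (V : 'I_K -> 'M[C]_(M, d))
  (G : 'M[C]_(N, d)) (i : 'I_K) : C :=
  \sum_(j < K | j != i)
     (P / d%:R) * \tr (mxH G *m H i j *m V j *m mxH (mxH G *m H i j *m V j)).

(* f(q) = o(q^{-1/n}) as q -> +oo (q real) *)
Definition little_o_root (C : numClosedFieldType) (f : C -> C) (n : nat) : Prop :=
  forall e : C, 0 < e -> exists X : C, 0 < X /\
    forall q : C, X <= q -> `|f q| <= e / n.-root q.

From HB Require Import structures.
From mathcomp Require Import all_boot all_order all_algebra.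
From mathcomp Require Import ring.
Import Order.TTheory GRing.Theory Num.Theory.
Set Implicit Arguments. Unset Strict Implicit. Unset Printing Implicit Defensive.
Local Open Scope ring_scope.

(* Write |Z|^2 = tr (Z Z^H) for the squared Frobenius norm.  The proof has
   three independent parts.
   1. Norm facts: |Z|^2 is invariant under Z |-> Z^H and Z |-> -Z, and does
      not increase when Z is multiplied (on either side) by a truncated
      unitary matrix; 2 d_c(A,B)^2 = |B B^H - A A^H|^2.
   2. Geometry of the scheme: since H_i = C_i^H F_i^H and the receive filter
      annihilates the quantized interference directions
      (U~^H Fhat^H V_{-i} = 0), each leakage block equals
      (Fhat U~)^H (F F^H - Fhat Fhat^H) W_j with W_j truncated unitary, so
      its norm is at most 2 d_c(Fhat, F)^2; summing, L_i <= K P/d 2 d_c^2.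
   3. Scaling: with Q = 2^{N_f} = P^{N_G/2}, Delta = 2/(c^{1/N_G} sqrt P);
      once eps Q <= 1 (eventually, by the little-o hypothesis) the
      quantization error satisfies P d_c^2 <= 16 / c^{2/N_G}, a constant.
   The degenerate case N = 0 (so N_G = 0) is trivial: there is no leakage. *)

Section Adjoint.
Variable C : numClosedFieldType.

Lemma mxHK m n (X : 'M[C]_(m, n)) : mxH (mxH X) = X.
Proof. by apply/matrixP => a b; rewrite !mxE conjCK. Qed.

Lemma mxHM m n p (A : 'M[C]_(m, n)) (B : 'M[C]_(n, p)) :
  mxH (A *m B) = mxH B *m mxH A.
Proof. by rewrite /mxH map_mxM trmx_mul. Qed.

Lemma mxHB m n (A B : 'M[C]_(m, n)) : mxH (A - B) = mxH A - mxH B.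
Proof. by rewrite /mxH map_mxB linearB. Qed.

Lemma mxH0 m n : mxH (0 : 'M[C]_(m, n)) = 0.
Proof. by rewrite /mxH map_mx0 trmx0. Qed.

Lemma mxH1 n : mxH (1%:M : 'M[C]_n) = 1%:M.
Proof. by rewrite /mxH map_mx1 trmx1. Qed.

End Adjoint.

Section FrobeniusSquare.
Variable C : numClosedFieldType.

Definition frob2 m n (Z : 'M[C]_(m, n)) : C := \tr (Z *m mxH Z).

Lemma frob2E m n (Z : 'M[C]_(m, n)) : frob2 Z = \sum_a \sum_b `|Z a b| ^+ 2.
Proof.
rewrite /frob2 /mxtrace; apply: eq_bigr => a _; rewrite mxE.
by apply: eq_bigr => b _; rewrite !mxE normCK.
Qed.

Lemma frob_frob2 m n (Z : 'M[C]_(m, n)) : frob Z = sqrtC (frob2 Z).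
Proof. by rewrite frob2E. Qed.

Lemma frob2_ge0 m n (Z : 'M[C]_(m, n)) : 0 <= frob2 Z.
Proof. by rewrite frob2E; do 2![apply: sumr_ge0 => ? _]; apply: exprn_ge0. Qed.

Lemma frob2N m n (Z : 'M[C]_(m, n)) : frob2 (- Z) = frob2 Z.
Proof. by rewrite !frob2E; do 2![apply: eq_bigr => ? _]; rewrite mxE normrN. Qed.

Lemma frob2_mxH m n (Z : 'M[C]_(m, n)) : frob2 (mxH Z) = frob2 Z.
Proof. by rewrite /frob2 mxHK mxtrace_mulC. Qed.

(* Pythagoras for the orthogonal projector X X^H: the part of Y in the
   range of X has norm |X^H Y|^2, the rest is a norm, hence nonnegative. *)
Lemma frob2_mulHl m k n (X : 'M[C]_(m, k)) (Y : 'M[C]_(m, n)) :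
  trunc_unitary X -> frob2 (mxH X *m Y) <= frob2 Y.
Proof.
move=> unitX; set Pr := X *m mxH X.
have Pr_idem : (1%:M - Pr) *m (1%:M - Pr) = 1%:M - Pr.
  rewrite mulmxBl mulmxBr !mul1mx mulmxBr mulmx1 /Pr !mulmxA.
  by rewrite -(mulmxA X) unitX mulmx1 subrr subr0.
have split_norm : frob2 ((1%:M - Pr) *m Y) = frob2 Y - frob2 (mxH X *m Y).
  rewrite /frob2 !mxHM mxHB mxH1 /Pr mxHM mxHK.
  rewrite mxtrace_mulC !mulmxA -(mulmxA (mxH Y)) Pr_idem.
  rewrite mulmxBr mulmx1 mulmxBl linearB /=; congr (_ - _).
    by rewrite mxtrace_mulC.
  by rewrite mulmxA -(mulmxA _ (mxH X)) mxtrace_mulC !mulmxA.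
by rewrite -subr_ge0 -split_norm frob2_ge0.
Qed.

Lemma frob2_mulr m k n (Y : 'M[C]_(m, n)) (W : 'M[C]_(n, k)) :
  trunc_unitary W -> frob2 (Y *m W) <= frob2 Y.
Proof. by move=> unitW; rewrite -frob2_mxH mxHM -(frob2_mxH Y) frob2_mulHl. Qed.

Lemma dchord_frob2 m n (A B : 'M[C]_(m, n)) :
  2 * dchord A B ^+ 2 = frob2 (B *m mxH B - A *m mxH A).
Proof.
rewrite /dchord frob_frob2 -opprB frob2N exprMn sqrtCK exprVn sqrtCK.
by rewrite mulrA mulfV ?mul1r // pnatr_eq0.
Qed.

Lemma dchord_ge0 m n (A B : 'M[C]_(m, n)) : 0 <= dchord A B.
Proof.
by rewrite /dchord frob_frob2 mulr_ge0 // ?invr_ge0 sqrtC_ge0 ?ler0n ?frob2_ge0.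
Qed.

End FrobeniusSquare.

(* The j-th interfering precoder V_{lift i j} placed in block position j:
   the block column W_j = V_{-i} E_j, where E_j selects the j-th block. *)
Section InterferenceBlocks.
Variables (C : numClosedFieldType) (K M N d : nat).
Variables (V : 'I_K -> 'M[C]_(M, d)) (i : 'I_K).

Definition block_select (j : 'I_K.-1) : 'M[C]_(\sum_(k < K.-1) d, d) :=
  \mxcol_(k < K.-1) (if k == j then 1%:M else 0 : 'M[C]_d).

Definition block_precoder (j : 'I_K.-1) : 'M[C]_(\sum_(k < K.-1) M, d) :=
  \mxcol_(k < K.-1) (if k == j then V (lift i j) else 0 : 'M[C]_(M, d)).

Lemma Vminus_select j : Vminus V i *m block_select j = block_precoder j.
Proof.
rewrite /Vminus /block_select mul_mxblock_mxrow; apply: eq_mxcol => a.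
rewrite (bigD1 j) //= eqxx mulmx1 big1 ?addr0 => [|k /negbTE->]; last first.
  by rewrite mulmx0.
by case: eqP => [->|]; rewrite ?eqxx.
Qed.

Lemma Hcat_block_precoder (H : 'I_K -> 'I_K -> 'M[C]_(N, M)) j :
  Hcat H i *m block_precoder j = H i (lift i j) *m V (lift i j).
Proof.
rewrite /Hcat /block_precoder mul_mxrow_mxcol (bigD1 j) //= eqxx big1 ?addr0 //.
by move=> k /negbTE->; rewrite mulmx0.
Qed.

Lemma block_precoder_unitary j :
  trunc_unitary (V (lift i j)) -> trunc_unitary (block_precoder j).
Proof.
move=> unitV; have mxH_col : mxH (block_precoder j) =
    \mxrow_k mxH (if k == j then V (lift i j) else 0 : 'M[C]_(M, d)).
  by apply/matrixP => a b; rewrite !mxE.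
rewrite /trunc_unitary mxH_col /block_precoder mul_mxrow_mxcol (bigD1 j) //=.
by rewrite eqxx unitV big1 ?addr0 // => k /negbTE->; rewrite mxH0 mul0mx.
Qed.

End InterferenceBlocks.

(* Each leakage block G^H H_ij V_j is bounded by the quantization error:
   G^H H_i = (Fhat U)^H (F F^H) and (Fhat U)^H (Fhat Fhat^H) W_j = 0 by the
   zero-forcing condition, so the block is (Fhat U)^H (F F^H - Fhat Fhat^H) W_j,
   a compression of F F^H - Fhat Fhat^H by truncated unitary matrices. *)
Lemma leakage_block_le (C : numClosedFieldType) (K M N d : nat)
  (H : 'I_K -> 'I_K -> 'M[C]_(N, M)) (V : 'I_K -> 'M[C]_(M, d)) (i : 'I_K)
  (F : 'M[C]_(\sum_(j < K.-1) M, N)) (Ci : 'M[C]_N)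
  (Fh : 'M[C]_(\sum_(j < K.-1) M, N)) (U : 'M[C]_(N, d)) (j : 'I_K.-1) :
  trunc_unitary (V (lift i j)) -> Ci \in unitmx -> mxH (Hcat H i) = F *m Ci ->
  trunc_unitary Fh -> trunc_unitary U -> mxH U *m mxH Fh *m Vminus V i = 0 ->
  frob2 (mxH (Gfilt Ci F Fh U) *m H i (lift i j) *m V (lift i j))
    <= 2 * dchord Fh F ^+ 2.
Proof.
move=> unitV Ci_unit HF unitFh unitU zero_forcing.
set W := block_precoder V i j.
have H_fact : Hcat H i = mxH Ci *m mxH F by rewrite -mxHM -HF mxHK.
have Ci_inv : mxH (invmx Ci) *m mxH Ci = 1%:M by rewrite -mxHM mulmxV // mxH1.
have quantized_free : mxH U *m mxH Fh *m (Fh *m mxH Fh *m W) = 0.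
  rewrite !mulmxA -(mulmxA (mxH U)) unitFh mulmx1 /W -Vminus_select mulmxA.
  by rewrite zero_forcing mul0mx.
have block_eq : mxH (Gfilt Ci F Fh U) *m H i (lift i j) *m V (lift i j)
    = mxH (Fh *m U) *m ((F *m mxH F - Fh *m mxH Fh) *m W).
  rewrite -mulmxA -Hcat_block_precoder H_fact /Gfilt !mxHM.
  rewrite mulmxBl mulmxBr quantized_free subr0 mxHK !mulmxA; congr (_ *m _).
  by rewrite -(mulmxA _ (mxH (invmx Ci))) Ci_inv mulmx1.
rewrite block_eq dchord_frob2; apply: le_trans (frob2_mulHl _ _) _.
  by rewrite /trunc_unitary mxHM !mulmxA -(mulmxA (mxH U)) unitFh mulmx1.
exact/frob2_mulr/block_precoder_unitary.
Qed.

(* Summing the K-1 interference blocks (and padding to K terms):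
   L_i <= K (P/d) 2 d_c(Fhat, F)^2. *)
Lemma leakage_le_chordal (C : numClosedFieldType) (K M N d : nat) (P : C)
  (H : 'I_K -> 'I_K -> 'M[C]_(N, M)) (V : 'I_K -> 'M[C]_(M, d)) (i : 'I_K)
  (F : 'M[C]_(\sum_(j < K.-1) M, N)) (Ci : 'M[C]_N)
  (Fh : 'M[C]_(\sum_(j < K.-1) M, N)) (U : 'M[C]_(N, d)) :
  0 <= P -> (forall j, trunc_unitary (V j)) ->
  Ci \in unitmx -> mxH (Hcat H i) = F *m Ci ->
  trunc_unitary Fh -> trunc_unitary U -> mxH U *m mxH Fh *m Vminus V i = 0 ->
  leakage P H V (Gfilt Ci F Fh U) i <= K%:R * (P / d%:R * (2 * dchord Fh F ^+ 2)).
Proof.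
move=> P_ge0 unitV Ci_unit HF unitFh unitU zero_forcing.
set term := P / d%:R * _.
have term_ge0 : 0 <= term.
  by rewrite /term dchord_frob2 mulr_ge0 ?divr_ge0 ?ler0n ?frob2_ge0.
have -> : K%:R * term = \sum_(j < K) term by rewrite sumr_const card_ord mulr_natl.
rewrite /leakage big_mkcond /=; apply: ler_sum => j _; case: ifPn => // j_neq_i.
have i_neq_j : i != j by rewrite eq_sym.
have [j' -> _] := unlift_some i_neq_j.
by apply: ler_wpM2l (leakage_block_le _ _ _ _ _ _); rewrite ?divr_ge0 ?ler0n.
Qed.

(* With Q = (sqrt P)^n, Delta = 2 / (c^{1/n} sqrt P); hence a quantization
   error within Delta (1 + eps), eps <= 1, has P d_c^2 <= 16 / c^{2/n}. *)
Lemma quantization_error_scaling (C : numClosedFieldType) (n : nat)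
    (c P dc eps : C) :
  (0 < n)%N -> 0 < c -> 0 < P -> 0 <= dc -> eps <= 1 ->
  dc <= 2 / n.-root (c * sqrtC P ^+ n) * (1 + eps) ->
  P * dc ^+ 2 <= 16 / n.-root c ^+ 2.
Proof.
move=> n_gt0 c_gt0 P_gt0 dc_ge0 eps_le1 dc_le.
set s := sqrtC P; set r := n.-root c.
have s_gt0 : 0 < s by rewrite sqrtC_gt0.
have r_gt0 : 0 < r by rewrite rootC_gt0.
have root_Q : n.-root (c * s ^+ n) = r * s.
  by rewrite rootCMl ?ltW // exprCK // ltW.
have dc_le4 : dc <= 4 / (r * s).
  apply: le_trans dc_le _; rewrite root_Q.
  have -> : 4 / (r * s) = 2 / (r * s) * (1 + 1).
    by rewrite mulrAC; congr (_ * _); ring.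
  by rewrite ler_pM2l ?lerD2l // divr_gt0 ?mulr_gt0.
have -> : 16 / r ^+ 2 = P * (4 / (r * s)) ^+ 2.
  by rewrite /s -{1}(sqrtCK P); field; rewrite !gt_eqF.
by rewrite ler_pM2l // ler_pXn2r ?nnegrE // (le_trans dc_ge0).
Qed.

Lemma little_o_root_eventually_le1 (C : numClosedFieldType) (eps : C -> C)
    (n : nat) :
  (0 < n)%N -> (forall q, eps q \is Num.real) -> little_o_root eps n ->
  exists P0 : C, 0 < P0 /\ forall P, P0 <= P -> eps (sqrtC P ^+ n) <= 1.
Proof.
move=> n_gt0 eps_real eps_o; have [X [X_gt0 eps_le]] := eps_o 1 ltr01.
exists (X ^+ 2 + 1); split=> [|P P_large].
  exact: ltr_wpDl (exprn_ge0 _ (ltW X_gt0)) ltr01.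
have P_ge1 : 1 <= P by apply: le_trans P_large; rewrite lerDr exprn_ge0 ?ltW.
have s_ge1 : 1 <= sqrtC P.
  by rewrite -sqrtC1 ler_sqrtC ?nnegrE ?ler01 ?(le_trans ler01 P_ge1).
have X_le_s : X <= sqrtC P.
  rewrite -(ler_pXn2r (n := 2)) ?nnegrE ?sqrtCK //.
  - by apply: le_trans P_large; rewrite lerDl.
  - exact: ltW.
  - exact: le_trans ler01 s_ge1.
have Q_ge_s : sqrtC P <= sqrtC P ^+ n by rewrite ler_eXnr.
have Q_ge1 : 1 <= sqrtC P ^+ n := le_trans s_ge1 Q_ge_s.
apply: le_trans (real_ler_norm (eps_real _)) _.
apply: le_trans (eps_le _ (le_trans X_le_s Q_ge_s)) _.
by rewrite div1r invf_le1 ?rootC_ge1 // rootC_gt0 // (lt_le_trans ltr01).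
Qed.

Theorem corollary1 (C : numClosedFieldType) (K M N d : nat) (c : C)
    (eps : C -> C) :
  (0 < d)%N -> (N <= K.-1 * M)%N -> (N < K.-1 * M)%N -> 0 < c ->
  (forall q, eps q \is Num.real) ->
  little_o_root eps (NG K M N) ->
  exists B : C, exists P0 : C, 0 < P0 /\
  forall P : C, P0 <= P ->
  (* Q = 2^{N_f} with N_f = N((K-1)M-N) log2 P, i.e. Q = P^{N_G/2} *)
  let Q := sqrtC P ^+ NG K M N in
  forall S : seq 'M[C]_(\sum_(j < K.-1) M, N),
    (size S)%:R = Q ->
    (forall X, X \in S -> trunc_unitary X) ->
    (forall F : 'M[C]_(\sum_(j < K.-1) M, N), trunc_unitary F ->
       exists2 X, X \in S & dchord X F <= Delta K M N c Q * (1 + eps Q)) ->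
  forall (H : 'I_K -> 'I_K -> 'M[C]_(N, M)) (V : 'I_K -> 'M[C]_(M, d))
         (i : 'I_K)
         (F : 'M[C]_(\sum_(j < K.-1) M, N)) (Ci : 'M[C]_N)
         (Fh : 'M[C]_(\sum_(j < K.-1) M, N)) (U : 'M[C]_(N, d)),
    (forall j, trunc_unitary (V j)) ->
    trunc_unitary F -> Ci \in unitmx -> mxH (Hcat H i) = F *m Ci ->
    Fh \in S -> (forall X, X \in S -> dchord Fh F <= dchord X F) ->
    trunc_unitary U -> mxH U *m mxH Fh *m Vminus V i = 0 ->
    leakage P H V (Gfilt Ci F Fh U) i <= B.
Proof.
move=> _ _ N_lt c_gt0 eps_real eps_o.
have [N0|N_gt0] := posnP N.
  exists 0, 1; split=> // P _ Q S _ _ _ H V i F Ci Fh U _ _ _ _ _ _ _ _.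
  subst N; rewrite /leakage big1 // => j _.
  by rewrite (thinmx0 (mxH _)) !mul0mx mxtrace0 mulr0.
have NG_gt0 : (0 < NG K M N)%N by rewrite /NG !muln_gt0 N_gt0 subn_gt0 N_lt.
have [P0 [P0_gt0 eps_le1]] :=
  little_o_root_eventually_le1 NG_gt0 eps_real eps_o.
exists (K%:R * (2 / d%:R * (16 / (NG K M N).-root c ^+ 2))), P0.
split=> // P P0_le_P Q S _ S_unitary S_cover H V i F Ci Fh U V_unitary
  F_unitary Ci_unit HF Fh_in_S Fh_nearest U_unitary zero_forcing.
have P_gt0 : 0 < P := lt_le_trans P0_gt0 P0_le_P.
(* The nearest codeword is at least as close as the covering codeword. *)
have [X X_in_S X_close] := S_cover F F_unitary.
have Fh_close := le_trans (Fh_nearest X X_in_S) X_close.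
apply: le_trans (leakage_le_chordal (ltW P_gt0) V_unitary Ci_unit HF
  (S_unitary _ Fh_in_S) U_unitary zero_forcing) _.
apply: ler_wpM2l; first exact: ler0n.
have -> : P / d%:R * (2 * dchord Fh F ^+ 2) = 2 / d%:R * (P * dchord Fh F ^+ 2).
  by ring.
apply: ler_wpM2l; first by rewrite divr_ge0 ?ler0n.
exact: quantization_error_scaling NG_gt0 c_gt0 P_gt0 (dchord_ge0 _ _)
  (eps_le1 _ P0_le_P) Fh_close.
Qed.
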